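(* Let $n,d\ge1$ and $\epsilon_i>0$. Consider datasets of voter $i$ of the form $D_i=\{\langle X_1,Z_1\rangle,\dots,\langle X_n,Z_n\rangle\}$ with $X_j,Z_j\in\mathbb{R}^d$, $\|X_j\|_2\le 1/2$, $\|Z_j\|_2\le 1/2$, and set $V_j=X_j-Z_j$. Define the approximate objective $$\hat f_{D_i}(\boldsymbol\beta)=\sum_{j=1}^n\sum_{k=0}^{2}\frac{f_1^{(k)}(0)}{k!}(\boldsymbol\beta^\top V_j)^k=\sum_{j=1}^n\Big(\ln\tfrac12+\sqrt{2/\pi}\,\boldsymbol\beta^\top V_j-\tfrac1\pi(\boldsymbol\beta^\top V_j)^2\Big),$$ where $f_1(z)=\ln\Phi(z)$ and $\Phi$ is the standard normal CDF. Write $\hat f_{D_i}(\boldsymbol\beta)=\sum_{w=0}^{2}\sum_{\phi\in\Psi_w}\big(\sum_{j=1}^n\lambda_{\phi,V_j}\big)\phi(\boldsymbol\beta)$, where $\Psi_w$ is the set of monomials $\beta[1]^{c_1}\cdots\beta[d]^{c_d}$ with $c_1+\dots+c_d=w$ and $\lambda_{\phi,V_j}$ is the coefficient of $\phi$ in the $j$-th summand. Let $\Delta_{\mathrm{upper}}=2\sqrt{2d/\pi}+2d/\pi$. Consider the randomized algorithm (Algorithm 3) which, for each $w\in\{0,1,2\}$ and each $\phi\in\Psi_w$, computes $\lambda_\phi=\sum_{j=1}^n\lambda_{\phi,V_j}+\eta_\phi$ with the $\eta_\phi$ independent zero-mean Laplace variables of scale $\Delta_{\mathrm{upper}}/\epsilon_i$,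 forms $f^*_{D_i}(\boldsymbol\beta)=\sum_{w=0}^2\sum_{\phi\in\Psi_w}\lambda_\phi\,\phi(\boldsymbol\beta)$, and outputs $\boldsymbol\beta_i^*\in\operatorname*{argmax}_{\boldsymbol\beta}f^*_{D_i}(\boldsymbol\beta)$ (computed from the noisy coefficients alone). Then this algorithm satisfies $\epsilon_i$-differential privacy in the record-level distributed sense (RLDP): for any two such datasets $D_i,D_i'$ of $n$ records differing in exactly one record and any measurable set $\mathcal{Y}$ of outputs, $\Pr[\boldsymbol\beta_i^*(D_i)\in\mathcal{Y}]\le e^{\epsilon_i}\Pr[\boldsymbol\beta_i^*(D_i')\in\mathcal{Y}]$.
   Context: The Laplace distribution with scale $\lambda$ has density $\frac{1}{2\lambda}e^{-|x|/\lambda}$. $\beta[k]$ denotes the $k$-th coordinate of $\boldsymbol\beta\in\mathbb{R}^d$. *)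

From HB Require Import structures.
From mathcomp Require Import all_boot all_order all_algebra.
From mathcomp Require Import all_classical all_reals all_analysis.
Set Implicit Arguments. Unset Strict Implicit. Unset Printing Implicit Defensive.
Import Order.TTheory GRing.Theory Num.Theory.
Import numFieldNormedType.Exports.
Local Open Scope classical_set_scope.
Local Open Scope ring_scope.

Definition expo (d : nat) := {ffun 'I_d -> 'I_3}.
Definition mdeg (d : nat) (c : expo d) : nat := (\sum_(k < d) (c k : nat))%N.

Definition Mon (d : nat) := {c : expo d | (mdeg c <= 2)%N}.
Definition Psi (d w : nat) : set (Mon d) := [set c | mdeg (val c) = w].

Definition mono {R : ringType} (d : nat) (c : Mon d) (beta : d.-tuple R) : R :=
  \prod_(k < d) tnth beta k ^+ (val c k : nat).

Definition record (R : Type) (d : nat) := (d.-tuple R * d.-tuple R)%type.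

Definition l2norm {R : rcfType} (d : nat) (x : d.-tuple R) : R :=
  Num.sqrt (\sum_(k < d) tnth x k ^+ 2).

Definition Vrec {R : ringType} (d : nat) (r : record R d) : d.-tuple R :=
  [tuple tnth r.1 k - tnth r.2 k | k < d].

Definition dotp {R : ringType} (d : nat) (b v : d.-tuple R) : R :=
  \sum_(k < d) tnth b k * tnth v k.

(* f_1^{(k)}(0)/k! for f_1 = ln Phi, k = 0,1,2. *)
Definition taylor_coef {R : realType} (k : nat) : R :=
  match k with
  | 0 => ln (2^-1)
  | 1 => Num.sqrt (2 / pi)
  | _ => - pi^-1
  end.

Definition fhat {R : realType} (n d : nat) (D : 'I_n -> record R d)
  (beta : d.-tuple R) : R :=
  \sum_(j < n) \sum_(k < 3) taylor_coef k * dotp beta (Vrec (D j)) ^+ k.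

(* lambda_{phi,V}: the coefficient of the monomial phi_c in
   sum_{k=0}^2 taylor_coef k * (beta^T V)^k, i.e. by the multinomial theorem
   taylor_coef w * (w! / prod_k c_k!) * prod_k V[k]^{c_k}, w = deg c. *)
Definition lam_coef {R : realType} (d : nat) (c : Mon d) (V : d.-tuple R) : R :=
  taylor_coef (mdeg (val c)) * ((mdeg (val c))`!)%:R
  / (\prod_(k < d) ((val c k : nat)`!)%:R)
  * \prod_(k < d) tnth V k ^+ (val c k : nat).

Definition coefD {R : realType} (n d : nat) (D : 'I_n -> record R d) (c : Mon d) : R :=
  \sum_(j < n) lam_coef c (Vrec (D j)).

Definition Delta_upper {R : realType} (d : nat) : R :=
  2 * Num.sqrt (2 * d%:R / pi) + 2 * d%:R / pi.

Definition laplace_pdf {R : realType} (b x : R) : R :=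
  (2 * b)^-1 * expR (- `|x| / b).

Definition is_laplace {dO} {O : measurableType dO} {R : realType}
  (P : probability O R) (b : R) (X : O -> R) : Prop :=
  forall B : set R, measurable B ->
    P (X @^-1` B) = (\int[lebesgue_measure]_(x in B) (laplace_pdf b x)%:E)%E.

Definition mutually_independent {dO} {O : measurableType dO} {R : realType}
  (I : finType) (P : probability O R) (X : I -> O -> R) : Prop :=
  forall (J : {set I}) (B : I -> set R), (forall i, measurable (B i)) ->
    P (\bigcap_(i in [set i | i \in J]) (X i @^-1` B i)) =
    (\prod_(i in J) P (X i @^-1` B i))%E.

(* Coefficient space: the vector (lambda_phi)_phi, stored as a tuple indexed
   by enum_rank of the monomial (so it carries the product sigma-algebra). *)
Definition ncoef (d : nat) := #|{: Mon d}|.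

Definition fstar {R : realType} (d : nat) (lam : (ncoef d).-tuple R)
  (beta : d.-tuple R) : R :=
  \sum_(c : Mon d) tnth lam (enum_rank c) * mono c beta.

Definition noisy_coefs {R : realType} {O : Type} (n d : nat)
  (D : 'I_n -> record R d) (eta : Mon d -> O -> R) (w : O) : (ncoef d).-tuple R :=
  [tuple coefD D (enum_val i) + eta (enum_val i) w | i < ncoef d].

Definition argmax_selector {R : realType} (d : nat)
  (g : (ncoef d).-tuple R -> d.-tuple R) : Prop :=
  forall lam, (exists beta, forall beta', fstar lam beta' <= fstar lam beta) ->
    forall beta', fstar lam beta' <= fstar lam (g lam).

Definition valid_record {R : realType} (d : nat) (r : record R d) : Prop :=
  l2norm r.1 <= 2^-1 /\ l2norm r.2 <= 2^-1.

From Pilot Require Import Defs.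
From HB Require Import structures.
From mathcomp Require Import all_boot all_order all_algebra.
From mathcomp Require Import all_classical all_reals all_analysis.
From mathcomp Require Import measurable_realfun ring lra.
Set Implicit Arguments. Unset Strict Implicit. Unset Printing Implicit Defensive.
Import Order.TTheory GRing.Theory Num.Theory.
Import numFieldNormedType.Exports.
Local Open Scope classical_set_scope.
Local Open Scope ring_scope.

(* beta* is a measurable function of the noisy coefficient vector, and that vector is the
   Laplace mechanism applied to the exact coefficients (sum_j lambda_{phi,V_j})_phi, so it
   suffices to combine two facts.

   Laplace mechanism: shifting a Laplace(b) variable by s multiplies its density by at most
   exp(|s|/b).  If the other noise coordinates are independent of it, Fubini lifts this to
   the joint law, and shifting the coordinates one at a time bounds the privacy loss by
   exp(||a - a'||_1 / b).

   Sensitivity: changing one record only changes its own summand V.  The degree-0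
   coefficient does not depend on V, and by the multinomial theorem (read off the
   coefficients of prod_k (1 + x_k X + x_k^2 X^2 / 2)) the absolute values of the degree-w
   coefficients sum to |f_1^(w)(0)/w!| (sum_k |V[k]|)^w.  Since
   sum_k |V[k]| <= sqrt d (||X|| + ||Z||) <= sqrt d, the l1 distance between the two
   coefficient vectors is at most 2 (sqrt(2d/pi) + d/pi) = Delta_upper. *)

Section laplace_density.
Context {R : realType}.
Implicit Types b s x y : R.

Lemma measurable_laplace_pdf b : measurable_fun [set: R] (laplace_pdf b).
Proof.
apply: measurable_funM => //; apply: measurableT_comp => //.
by apply: measurable_funM => //; exact: measurableT_comp.
Qed.

Lemma laplace_pdf_ge0 b x : 0 < b -> 0 <= laplace_pdf b x.
Proof. by move=> b0; rewrite mulr_ge0 ?expR_ge0 // invr_ge0 mulr_ge0 // ltW. Qed.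

Lemma laplace_pdf_shift_le b s y : 0 < b ->
  laplace_pdf b (y - s) <= expR (`|s| / b) * laplace_pdf b y.
Proof.
move=> b0; rewrite /laplace_pdf mulrCA ler_pM2l ?invr_gt0 ?mulr_gt0 //.
rewrite -expRD ler_expR -mulrDl ler_pM2r ?invr_gt0 //.
by have := ler_normD (y - s) s; rewrite subrK; lra.
Qed.

Lemma lebesgue_measure_shift s (A : set R) : measurable A ->
  lebesgue_measure ((fun x => x + s) @^-1` A) = lebesgue_measure A.
Proof.
have mshift : measurable_fun [set: measurableTypeR R]
    (fun x : measurableTypeR R => (x + s : measurableTypeR R)).
  exact: measurable_funD.
move=> mA; have := @lebesgue_measure_unique R
  (pushforward (@lebesgue_measure R) (fun x : measurableTypeR R => (x + s : measurableTypeR R))).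
move=> /(_ mshift) E; rewrite [RHS]E //.
move=> _ [[a c] _ <-] /=; rewrite /pushforward.
have -> : (fun x => x + s) @^-1` `]a, c]%classic = `](a - s), (c - s)]%classic.
  by apply/seteqP; split => x /=; rewrite !in_itv /= => /andP[? ?]; apply/andP; split; lra.
rewrite !lebesgue_measure_itv /= !lte_fin ltrD2r.
by case: ifP => // _; rewrite -!EFinD; congr (_%:E); ring.
Qed.

Lemma laplace_integral_shift_le b s (B : set R) : 0 < b -> measurable B ->
  (\int[lebesgue_measure]_(x in (fun x => (x + s)%R) @^-1` B) (laplace_pdf b x)%:E
   <= (expR (`|s| / b))%:E * \int[lebesgue_measure]_(x in B) (laplace_pdf b x)%:E)%E.
Proof.
move=> b0 mB.
have mshift : measurable_fun [set: measurableTypeR R]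
    (fun x : measurableTypeR R => (x + s : measurableTypeR R)).
  exact: measurable_funD.
have mpdf_shifted : measurable_fun [set: R] (fun y => laplace_pdf b (y - s)).
  exact: measurableT_comp (measurable_laplace_pdf b) (measurable_funB _ _).
have -> : (\int[lebesgue_measure]_(x in (fun x => (x + s)%R) @^-1` B) (laplace_pdf b x)%:E
  = \int[lebesgue_measure]_(x in (fun x => (x + s)%R) @^-1` B)
      ((fun y => (laplace_pdf b (y - s))%:E) \o (fun x => (x + s)%R)) x)%E.
  by apply: eq_integral => x _ /=; rewrite addrK.
rewrite -(ge0_integral_pushforward mshift lebesgue_measure) //; last 2 first.
- exact/measurable_EFinP/measurable_funTS.
- by move=> y _; rewrite lee_fin laplace_pdf_ge0.
rewrite (eq_measure_integral lebesgue_measure); last first.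
  by move=> A mA _; exact: lebesgue_measure_shift.
rewrite -ge0_integralZl_EFin ?expR_ge0 //; last 2 first.
- by move=> x _; rewrite lee_fin laplace_pdf_ge0.
- by apply/measurable_EFinP/measurable_funTS; exact: measurable_laplace_pdf.
apply: ge0_le_integral => //.
- by move=> x _; rewrite lee_fin laplace_pdf_ge0.
- exact/measurable_EFinP/measurable_funTS.
- apply/measurable_EFinP/measurable_funM => //.
  by apply: measurable_funTS; exact: measurable_laplace_pdf.
- by move=> x _; rewrite -EFinM lee_fin laplace_pdf_shift_le.
Qed.

End laplace_density.

Lemma laplace_shift_le {R : realType} dO (O : measurableType dO) (P : probability O R)
    (X : O -> R) (b s : R) (B : set R) :
  0 < b -> is_laplace P b X -> measurable B ->
  (P ((fun w => (X w + s)%R) @^-1` B) <= (expR (`|s| / b))%:E * P (X @^-1` B))%E.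
Proof.
move=> b0 lapX mB.
have mBs : measurable ((fun x => x + s) @^-1` B).
  by rewrite -[X in measurable X]setTI; exact: measurable_funD.
rewrite (_ : (fun w => X w + s) @^-1` B = X @^-1` ((fun x => x + s) @^-1` B)) // !lapX //.
exact: laplace_integral_shift_le.
Qed.

Lemma laplace_shift_indep_le {R : realType} dO (O : measurableType dO)
    (P : probability O R) dT (T : measurableType dT) (X : O -> R) (Y : O -> T)
    (b s : R) (S : set (T * R)) :
  0 < b -> measurable_fun setT X -> measurable_fun setT Y -> is_laplace P b X ->
  (forall B C, measurable B -> measurable C ->
     P (X @^-1` B `&` Y @^-1` C) = (P (X @^-1` B) * P (Y @^-1` C))%E) ->
  measurable S ->
  (P [set w | S (Y w, (X w + s)%R)] <= (expR (`|s| / b))%:E * P [set w | S (Y w, X w)])%E.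
Proof.
move=> b0 mX mY lapX indXY mS.
have mYX : measurable_fun setT (fun w => (Y w, X w)) := measurable_fun_pair mY mX.
pose lawY := distribution P (mfun_Sub (mem_set mY) : {mfun O >-> T}).
pose lawX := distribution P (mfun_Sub (mem_set mX) : {mfun O >-> R}).
pose lawYX := distribution P (mfun_Sub (mem_set mYX) : {mfun O >-> (T * R)%type}).
have lawYXE Z : measurable Z -> (lawY \x lawX)%E Z = lawYX Z.
  apply: product_measure_unique => A B mA mB.
  rewrite /lawYX /lawY /lawX /distribution /pushforward /= muleC -indXY //.
  by congr (P _); apply/seteqP; split=> w /= [].
pose shift z : T * R := (z.1, z.2 + s).
have mshift : measurable_fun setT shift by apply: measurable_fun_pair => //; exact: measurable_funD.
have mSs : measurable (shift @^-1` S) by rewrite -[X in measurable X]setTI; exact: mshift.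
change (lawYX (shift @^-1` S) <= (expR (`|s| / b))%:E * lawYX S)%E.
rewrite -!lawYXE // /product_measure1 /= -ge0_integralZl_EFin //;
  last exact: measurable_fun_xsection.
apply: ge0_le_integral => //.
- exact: measurable_fun_xsection.
- exact/emeasurable_funM/measurable_fun_xsection.
move=> y _; rewrite /lawX /distribution /pushforward /=.
rewrite (_ : xsection _ y = (fun x => x + s) @^-1` xsection S y); last first.
  by apply/seteqP; split => x; rewrite /xsection /shift /= !inE.
exact/laplace_shift_le/measurable_xsection.
Qed.

Section tuple_rectangles.
Context d (T : measurableType d) (m : nat).

Definition rect (Cs : 'I_m -> set T) : set (m.-tuple T) :=
  [set t | forall i, Cs i (tnth t i)].

Definition measurable_rects : set (set (m.-tuple T)) :=
  [set rect Cs | Cs in [set Cs | forall i, measurable (Cs i)]].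

Lemma measurable_rect Cs : (forall i, measurable (Cs i)) -> measurable (rect Cs).
Proof.
move=> mCs.
have -> : rect Cs = \bigcap_(i in [set: 'I_m]) ((@tnth m T)^~ i @^-1` Cs i).
  by apply/seteqP; split => t /= Ct i; [move=> _|]; exact: Ct.
apply: fin_bigcap_measurable => [|i _]; first exact: finite_finset.
by rewrite -[X in measurable X]setTI; exact: measurable_tnth.
Qed.

Lemma measurable_rects_generate : measurable `<=` <<s measurable_rects >>.
Proof.
apply: smallest_sub; first exact: smallest_sigma_algebra.
apply: (big_ind (fun X => X `<=` <<s measurable_rects >>)) => //.
- by move=> X Y sX sY Z [/sX|/sY].
move=> i _ _ [B mB <-]; apply: sub_sigma_algebra.
exists (fun j => if j == i then B else setT) => [j|]; first by case: ifP.
apply/seteqP; split => t /=; first by move=> Ct; split => //; have := Ct i; rewrite eqxx.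
by move=> [_ Bt] j; case: ifP => // /eqP ->.
Qed.

Lemma tuple_measure_unique (R : realType) (mu nu : {measure set (m.-tuple T) -> \bar R}) :
  (mu setT < +oo)%E ->
  (forall Cs, (forall i, measurable (Cs i)) -> mu (rect Cs) = nu (rect Cs)) ->
  forall A, measurable A -> mu A = nu A.
Proof.
move=> mu_fin mu_nu A /measurable_rects_generate.
apply: (g_sigma_algebra_measure_unique measurable_rects _ (fun _ => setT)) => //.
- by move=> _ [Cs mCs <-]; exact: measurable_rect.
- by move=> _; exists (fun _ => setT) => //; apply/seteqP; split.
- by apply/seteqP; split => // t _; exists 0%N.
- move=> _ _ [Cs mCs <-] [Ds mDs <-].
  exists (fun i => Cs i `&` Ds i) => [i|]; first exact: measurableI.
  by apply/seteqP; split => t /=; [move=> CDt; split => i; case: (CDt i)|move=> [Ct Dt] i; split].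
- by move=> _ [Cs mCs <-]; exact: mu_nu.
Qed.

End tuple_rectangles.

Lemma mutually_independent_reindex {R : realType} dO (O : measurableType dO)
    (P : probability O R) (I J : finType) (f : J -> I) (g : I -> J) (X : I -> O -> R) :
  cancel f g -> mutually_independent P X -> mutually_independent P (X \o f).
Proof.
move=> fK indX K B mB.
have := indX (f @: K) (B \o g) (fun i => mB (g i)).
rewrite big_imset /=; last exact: in2W (can_inj fK).
under eq_bigr do rewrite fK.
move=> <-; congr (P _); apply/seteqP; split => w /= Xw.
- by move=> _ /imsetP[j Kj ->]; rewrite fK; exact: Xw.
- by move=> j Kj; have := Xw (f j); rewrite fK; apply; exact: imset_f.
Qed.

Lemma mutually_independent_bigcap {R : realType} dO (O : measurableType dO)
    (P : probability O R) (I : finType) (X : I -> O -> R) (B : I -> set R) :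
  mutually_independent P X -> (forall i, measurable (B i)) ->
  P (\bigcap_i (X i @^-1` B i)) = (\prod_i P (X i @^-1` B i))%E.
Proof.
move=> indX mB; have := indX [set: I]%SET B mB.
rewrite (eq_bigl xpredT) => [<-|i]; last by rewrite inE.
by congr (P _); apply/seteqP; split => w Xw i _; apply: Xw => //; rewrite /= inE.
Qed.

Section laplace_mechanism.
Context {R : realType} dO (O : measurableType dO) (P : probability O R) (m : nat).
Variable noise : 'I_m -> O -> R.
Hypothesis mnoise : forall i, measurable_fun setT (noise i).
Hypothesis indep_noise : mutually_independent P noise.

Definition noise_off (k : 'I_m) (w : O) : m.-tuple R :=
  [tuple if i == k then 0 else noise i w | i < m].

Lemma measurable_noise_off k : measurable_fun setT (noise_off k).
Proof.
apply/measurable_fun_tnthP => i.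
rewrite (_ : _ \o _ = fun w => if i == k then 0 else noise i w); last first.
  by apply: funext => w /=; rewrite tnth_mktuple.
by case: (i == k).
Qed.

Lemma noise_off_indep_rect k B Cs : measurable B -> (forall i, measurable (Cs i)) ->
  P (noise k @^-1` B `&` noise_off k @^-1` rect Cs) =
  (P (noise k @^-1` B) * P (noise_off k @^-1` rect Cs))%E.
Proof.
move=> mB mCs.
have [Cs_k0|not_Cs_k0] := pselect (Cs k 0); last first.
  rewrite (_ : noise_off k @^-1` _ = set0) ?setI0 ?measure0 ?mule0 //.
  by apply/seteqP; split => // w /(_ k); rewrite tnth_mktuple eqxx.
pose Bs A i := if i == k then A else Cs i.
have mBs A : measurable A -> forall i, measurable (Bs A i) by move=> mA i; rewrite /Bs; case: ifP.
have capE A : noise k @^-1` A `&` noise_off k @^-1` rect Cs =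
    \bigcap_i (noise i @^-1` Bs A i).
  apply/seteqP; split => w /=.
    move=> [Aw Cw] i _; rewrite /Bs; case: eqVneq => [-> //|ik].
    by have := Cw i; rewrite tnth_mktuple (negPf ik).
  move=> Cw; split => [|i]; first by have := Cw k I; rewrite /Bs eqxx.
  rewrite tnth_mktuple; case: eqVneq => [-> //|ik].
  by have := Cw i I; rewrite /Bs (negPf ik).
have PcapE A : measurable A -> P (noise k @^-1` A `&` noise_off k @^-1` rect Cs) =
    (P (noise k @^-1` A) * \prod_(i < m | i != k) P (noise i @^-1` Cs i))%E.
  move=> mA; rewrite capE mutually_independent_bigcap //; last exact: mBs.
  rewrite (bigD1 k) //= /Bs eqxx.
  by congr (_ * _)%E; apply: eq_bigr => i /negPf ->.
rewrite PcapE // -[noise_off k @^-1` _]setTI -(preimage_setT (noise k)) PcapE //.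
by rewrite preimage_setT probability_setT mul1e.
Qed.

Lemma noise_off_indep k B C : measurable B -> measurable C ->
  P (noise k @^-1` B `&` noise_off k @^-1` C) =
  (P (noise k @^-1` B) * P (noise_off k @^-1` C))%E.
Proof.
move=> mB mC.
have mkB : measurable (noise k @^-1` B) by rewrite -[X in measurable X]setTI; exact: mnoise.
have Pfin : P (noise k @^-1` B) \is a fin_num.
  by rewrite ge0_fin_numE ?measure_ge0 // (le_lt_trans (probability_le1 P mkB)) ?ltry.
have PkB_ge0 : (0 <= fine (P (noise k @^-1` B)))%R by rewrite fine_ge0 ?measure_ge0.
have moff := measurable_noise_off k.
have := tuple_measure_unique
  (mu := pushforward (mrestr P mkB) (noise_off k) : {measure set _ -> \bar R})
  (nu := mscale (NngNum PkB_ge0) (pushforward P (noise_off k))).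
move=> /(_ moff moff) muE.
rewrite setIC -[P (noise k @^-1` B) in RHS]fineK //; apply: muE mC => [|Cs mCs].
  change (P (noise_off k @^-1` setT `&` noise k @^-1` B) < +oo)%E.
  rewrite (le_lt_trans (probability_le1 P _)) ?ltry //.
  by apply: measurableI => //; rewrite -[X in measurable X]setTI; exact: moff.
change (P (noise_off k @^-1` rect Cs `&` noise k @^-1` B) =
  (fine (P (noise k @^-1` B)))%:E * P (noise_off k @^-1` rect Cs))%E.
by rewrite fineK // setIC noise_off_indep_rect.
Qed.

Variable b : R.
Hypothesis b_gt0 : 0 < b.
Hypothesis lap_noise : forall i, is_laplace P b (noise i).

Definition noisy (a : 'I_m -> R) (w : O) : m.-tuple R := [tuple a i + noise i w | i < m].

Lemma noisy_shift1_le (a a' : 'I_m -> R) (k : 'I_m) (A : set (m.-tuple R)) :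
  measurable A -> (forall i, i != k -> a i = a' i) ->
  (P (noisy a @^-1` A) <= (expR (`|a k - a' k| / b))%:E * P (noisy a' @^-1` A))%E.
Proof.
move=> mA aa'.
(* Both mechanisms factor through [F] at [(noise_off k, noise k + s)], with [s = a k - a' k]
   and [s = 0] respectively. *)
pose F (z : m.-tuple R * R) : m.-tuple R :=
  [tuple if i == k then a' k + z.2 else a' i + tnth z.1 i | i < m].
have mF : measurable_fun setT F.
  apply/measurable_fun_tnthP => i.
  rewrite (_ : _ \o _ = fun z => if i == k then a' k + z.2 else a' i + tnth z.1 i); last first.
    by apply: funext => z /=; rewrite tnth_mktuple.
  case: (i == k); apply: measurable_funD => //.
  exact: measurableT_comp (measurable_tnth i) measurable_fst.
have mFA : measurable (F @^-1` A) by rewrite -[X in measurable X]setTI; exact: mF.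
have noisyE (c : 'I_m -> R) : (forall i, i != k -> c i = a' i) ->
    noisy c = fun w => F (noise_off k w, (noise k w + (c k - a' k))%R).
  move=> ca'; apply: funext => w; apply: eq_from_tnth => i; rewrite !tnth_mktuple /=.
  by case: eqVneq => [->|ik] /=; [ring|rewrite ca'].
rewrite (noisyE a aa') (noisyE a' (fun _ _ => erefl)) subrr.
under [X in (_ <= _ * P X)%E]eq_fun do rewrite addr0.
exact: (laplace_shift_indep_le _ b_gt0 (mnoise k) (measurable_noise_off k)
  (lap_noise k) (noise_off_indep k) mFA).
Qed.

Definition hybrid (a a' : 'I_m -> R) (n : nat) (i : 'I_m) : R :=
  if (i < n)%N then a' i else a i.

Lemma noisy_hybrid_le (a a' : 'I_m -> R) (A : set (m.-tuple R)) : measurable A ->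
  forall n, (n <= m)%N ->
  (P (noisy a @^-1` A) <= (expR ((\sum_(i < m | (i < n)%N) `|a i - a' i|) / b))%:E *
                          P (noisy (hybrid a a' n) @^-1` A))%E.
Proof.
move=> mA; elim => [_|n IHn nm].
  by rewrite big_pred0 // mul0r expR0 mul1e.
pose k := Ordinal nm.
have ltnS_off i : i != k -> (i < n.+1)%N = (i < n)%N.
  by move=> ik; rewrite ltnS leq_eqVlt (negPf ik : (i == n :> nat) = false).
have hybrid_off i : i != k -> hybrid a a' n i = hybrid a a' n.+1 i.
  by move=> ik; rewrite /hybrid ltnS_off.
have := noisy_shift1_le mA hybrid_off.
have [-> ->] : hybrid a a' n k = a k /\ hybrid a a' n.+1 k = a' k.
  by rewrite /hybrid ltnn ltnSn.
move=> /(lee_wpmul2l (expR_ge0 _ : (0 <= _%:E)%E)) /(le_trans (IHn (ltnW nm))) /le_trans; apply.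
rewrite muleA -EFinM -expRD -mulrDl [in leRHS](bigD1 k) ?ltnSn //= addrC.
have lt_off (i : 'I_m) : ((i < n.+1)%N && (i != k)) = (i < n)%N.
  by case: eqVneq => [->|ik]; [rewrite andbF /= ltnn|rewrite (ltnS_off _ ik) andbT].
by rewrite (eq_bigl _ _ lt_off).
Qed.

Lemma laplace_mechanism_l1_le (a a' : 'I_m -> R) (A : set (m.-tuple R)) : measurable A ->
  (P (noisy a @^-1` A) <= (expR ((\sum_i `|a i - a' i|) / b))%:E * P (noisy a' @^-1` A))%E.
Proof.
move=> mA; have := noisy_hybrid_le a a' mA (leqnn m).
rewrite (eq_bigl xpredT) => [|i]; last by rewrite ltn_ord.
by rewrite (_ : hybrid a a' m = a') //; apply/funext => i; rewrite /hybrid ltn_ord.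
Qed.

End laplace_mechanism.

Section truncated_exponential.
Context {R : numFieldType}.

Definition trunc_exp_poly (y : R) : {poly R} := 1 + y *: 'X + (y ^+ 2 / 2) *: 'X^2.

Lemma trunc_exp_polyE (y : R) :
  trunc_exp_poly y = \sum_(j < 3) (y ^+ j / (j`!)%:R) *: 'X^j.
Proof. by rewrite !big_ord_recr big_ord0 /= add0r expr0 expr1 !divr1 scale1r. Qed.

Lemma coef_prod_trunc_exp_poly (s : seq R) :
  let p := \prod_(y <- s) trunc_exp_poly y in
  [/\ p`_0 = 1, p`_1 = \sum_(y <- s) y & p`_2 = (\sum_(y <- s) y) ^+ 2 / 2].
Proof.
elim: s => [|a s [p0 p1 p2]] /=.
  by rewrite !big_nil !coef1 /= expr2 !mul0r.
have [e0 e1 e2] : [/\ (trunc_exp_poly a)`_0 = 1, (trunc_exp_poly a)`_1 = a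
                    & (trunc_exp_poly a)`_2 = a ^+ 2 / 2].
  by rewrite !coefD !coefZ !coefXn !coefX !coef1 /=; split; rewrite ?mulr1 ?mulr0 ?addr0 ?add0r.
rewrite !big_cons !coefM !big_ord_recr !big_ord0 /= !add0r !subn0 !subnn e0 e1 e2 p0 p1 p2.
by split; [rewrite mulr1|rewrite mul1r mulr1 addrC|rewrite mul1r mulr1; field].
Qed.

Lemma coef_prod_trunc_exp_poly_multinomial (d : nat) (x : 'I_d -> R) (n : nat) :
  (\prod_(k < d) trunc_exp_poly (x k))`_n =
  \sum_(c : expo d | mdeg c == n) \prod_(k < d) (x k ^+ c k / ((c k)`!)%:R).
Proof.
under eq_bigr do rewrite trunc_exp_polyE.
rewrite bigA_distr_bigA /= coef_sum [RHS]big_mkcond /=.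
apply: eq_bigr => c _.
under eq_bigr do rewrite -mul_polyC.
rewrite big_split /= -rmorph_prod prodrXr mul_polyC coefZ coefXn eq_sym.
by case: eqP; rewrite ?mulr1 ?mulr0.
Qed.

Lemma multinomial_deg1 (d : nat) (x : 'I_d -> R) :
  \sum_(c : expo d | mdeg c == 1%N) \prod_(k < d) (x k ^+ c k / ((c k)`!)%:R) =
  \sum_(k < d) x k.
Proof.
rewrite -coef_prod_trunc_exp_poly_multinomial.
by have := coef_prod_trunc_exp_poly [seq x k | k <- index_enum 'I_d]; rewrite !big_map => -[].
Qed.

Lemma multinomial_deg2 (d : nat) (x : 'I_d -> R) :
  \sum_(c : expo d | mdeg c == 2%N) \prod_(k < d) (x k ^+ c k / ((c k)`!)%:R) =
  (\sum_(k < d) x k) ^+ 2 / 2.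
Proof.
rewrite -coef_prod_trunc_exp_poly_multinomial.
by have := coef_prod_trunc_exp_poly [seq x k | k <- index_enum 'I_d]; rewrite !big_map => -[].
Qed.

End truncated_exponential.

Section sensitivity.
Context {R : realType}.

Lemma leq_expo_mdeg (d : nat) (c : expo d) (k : 'I_d) : (c k <= mdeg c)%N.
Proof. by rewrite /mdeg (bigD1 k) //= leq_addr. Qed.

Lemma big_Mon (d : nat) (p : pred (expo d)) (F : expo d -> R) :
  (forall c, p c -> (mdeg c <= 2)%N) ->
  \sum_(c : Mon d | p (val c)) F (val c) = \sum_(c : expo d | p c) F c.
Proof.
move=> p_deg; rewrite [RHS](reindex_omap (val : Mon d -> expo d) insub); last first.
  by move=> c pc; rewrite (insubT (fun c : expo d => (mdeg c <= 2)%N) (p_deg c pc)).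
by apply: eq_bigl => c; rewrite valK eqxx andbT.
Qed.

Lemma normr_lam_coef (d : nat) (c : Mon d) (V : d.-tuple R) :
  `|lam_coef c V| = `|taylor_coef (mdeg (val c))| * ((mdeg (val c))`!)%:R *
     \prod_(k < d) (`|tnth V k| ^+ val c k / ((val c k)`!)%:R).
Proof.
rewrite /lam_coef !normrM normr_nat prodf_div -mulrA; congr (_ * _ * _).
rewrite normfV !normr_prod mulrC; congr (_ / _); apply: eq_bigr => k _.
  by rewrite normrX.
by rewrite normr_nat.
Qed.

Lemma sum_normr_lam_coef_deg (d : nat) (V : d.-tuple R) (w : nat) : (w <= 2)%N ->
  \sum_(c : Mon d | mdeg (val c) == w) `|lam_coef c V| =
  `|taylor_coef w| * (w`!)%:R *
  \sum_(c : expo d | mdeg c == w) \prod_(k < d) (`|tnth V k| ^+ c k / ((c k)`!)%:R).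
Proof.
move=> w_le2; under eq_bigr do rewrite normr_lam_coef.
rewrite (big_Mon (p := fun c => mdeg c == w)
  (fun c => `|taylor_coef (mdeg c)| * ((mdeg c)`!)%:R *
            \prod_(k < d) (`|tnth V k| ^+ c k / ((c k)`!)%:R))); last by move=> c /eqP ->.
by rewrite mulr_sumr; apply: eq_bigr => c /eqP ->.
Qed.

Lemma sqr_sum_normr_le (d : nat) (x : 'I_d -> R) :
  (\sum_(k < d) `|x k|) ^+ 2 <= d%:R * \sum_(k < d) x k ^+ 2.
Proof.
rewrite expr2 mulr_suml.
under eq_bigr do rewrite mulr_sumr.
apply: (@le_trans _ _ (\sum_(k < d) \sum_(l < d) ((x k ^+ 2 + x l ^+ 2) / 2))).
  apply: ler_sum => k _; apply: ler_sum => l _.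
  rewrite -(real_normK (num_real (x k))) -(real_normK (num_real (x l))).
  by have := sqr_ge0 (`|x k| - `|x l|); nra.
rewrite (eq_bigr (fun k => (d%:R * x k ^+ 2 + \sum_(l < d) x l ^+ 2) / 2)); last first.
  by move=> k _; rewrite -mulr_suml big_split /= sumr_const card_ord mulr_natl.
rewrite -mulr_suml big_split /= sumr_const card_ord -mulr_sumr -mulr_natl mulr1.
set S := \sum_(k < d) x k ^+ 2; lra.
Qed.

Lemma sum_normr_le_l2norm (d : nat) (x : d.-tuple R) :
  \sum_(k < d) `|tnth x k| <= Num.sqrt d%:R * l2norm x.
Proof.
rewrite /l2norm -sqrtrM // -(ger0_norm (sumr_ge0 _ (fun k _ => normr_ge0 (tnth x k)))).
rewrite -sqrtr_sqr ler_sqrt ?sqr_sum_normr_le //.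
by rewrite mulr_ge0 // sumr_ge0 // => k _; exact: sqr_ge0.
Qed.

Lemma sum_normr_Vrec_le (d : nat) (r : record R d) : valid_record r ->
  \sum_(k < d) `|tnth (Vrec r) k| <= Num.sqrt d%:R.
Proof.
move=> [r1_le r2_le].
apply: (@le_trans _ _ (\sum_(k < d) `|tnth r.1 k| + \sum_(k < d) `|tnth r.2 k|)).
  by rewrite -big_split /=; apply: ler_sum => k _; rewrite tnth_mktuple ler_normB.
have sqrt_d_ge0 := sqrtr_ge0 (d%:R : R).
have := ler_wpM2l sqrt_d_ge0 r1_le; have := ler_wpM2l sqrt_d_ge0 r2_le.
have := sum_normr_le_l2norm r.1; have := sum_normr_le_l2norm r.2.
lra.
Qed.

Lemma sum_normr_lam_coef_le (d : nat) (V : d.-tuple R) :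
  \sum_(k < d) `|tnth V k| <= Num.sqrt d%:R ->
  \sum_(c : Mon d | mdeg (val c) == 1%N) `|lam_coef c V| +
  \sum_(c : Mon d | mdeg (val c) == 2%N) `|lam_coef c V| <=
  Num.sqrt (2 * d%:R / pi) + d%:R / pi.
Proof.
move=> L_le; rewrite !sum_normr_lam_coef_deg // multinomial_deg1 multinomial_deg2 /taylor_coef.
set L := \sum_(k < d) `|tnth V k|.
have L_ge0 : 0 <= L by rewrite sumr_ge0.
have pi_gt0 : 0 < (pi : R) := pi_gt0 R.
have pi_inv_ge0 : 0 <= (pi : R)^-1 by rewrite invr_ge0 ltW.
rewrite ger0_norm ?sqrtr_ge0 // normrN ger0_norm // mulr1 (_ : 2`!%:R = 2 :> R) //.
rewrite [2 * d%:R / pi]mulrAC [Num.sqrt (2 / pi * _)]sqrtrM ?divr_ge0 ?(ltW pi_gt0) //.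
apply: lerD; first by rewrite ler_wpM2l ?sqrtr_ge0.
have L2_le : L ^+ 2 <= d%:R.
  rewrite -(sqr_sqrtr (ler0n _ d)); apply: lerXn2r => //; rewrite nnegrE ?sqrtr_ge0 //.
rewrite -mulrA [2 * _]mulrCA mulfV ?pnatr_eq0 // mulr1 mulrC.
exact: ler_wpM2r.
Qed.

Lemma lam_coef_deg0 (d : nat) (c : Mon d) (V V' : d.-tuple R) :
  mdeg (val c) = 0%N -> lam_coef c V = lam_coef c V'.
Proof.
move=> c_deg0; have c0 k : (val c k : nat) = 0%N.
  by apply/eqP; have := leq_expo_mdeg (val c) k; rewrite c_deg0 leqn0.
by rewrite /lam_coef; congr (_ * _); rewrite !big1 // => k _; rewrite c0 expr0.
Qed.

Lemma coefD_sensitivity (n d : nat) (D D' : 'I_n -> record R d) (j0 : 'I_n) :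
  valid_record (D j0) -> valid_record (D' j0) ->
  (forall j, j != j0 -> D j = D' j) ->
  \sum_(c : Mon d) `|Defs.coefD D c - Defs.coefD D' c| <= Delta_upper d.
Proof.
move=> vD vD' DD'.
set V := Vrec (D j0); set V' := Vrec (D' j0).
have coefD_diff c : Defs.coefD D c - Defs.coefD D' c = lam_coef c V - lam_coef c V'.
  rewrite /Defs.coefD (bigD1 j0) //= [X in _ - X](bigD1 j0) //=.
  under [X in _ - (_ + X)]eq_bigr => j /DD' <- do [].
  by rewrite opprD addrACA subrr addr0.
under eq_bigr do rewrite coefD_diff.
rewrite (bigID (fun c => mdeg (val c) == 0%N)) /= big1 ?add0r; last first.
  by move=> c /eqP c0; rewrite (lam_coef_deg0 V V' c0) subrr normr0.
rewrite (bigID (fun c => mdeg (val c) == 1%N)) /=.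
rewrite (eq_bigl (fun c => mdeg (val c) == 1%N)
  (P1 := fun c => (mdeg (val c) != 0%N) && (mdeg (val c) == 1%N))); last first.
  by move=> c /=; case: eqP => // ->.
rewrite (eq_bigl (fun c => mdeg (val c) == 2%N)
  (P1 := fun c => (mdeg (val c) != 0%N) && (mdeg (val c) != 1%N))); last first.
  by move=> [c /=]; case: (mdeg c) => [|[|[|]]].
have normB_le (p : pred (Mon d)) :
    \sum_(c | p c) `|lam_coef c V - lam_coef c V'| <=
    \sum_(c | p c) `|lam_coef c V| + \sum_(c | p c) `|lam_coef c V'|.
  by rewrite -big_split /=; apply: ler_sum => c _; exact: ler_normB.
have := normB_le (fun c => mdeg (val c) == 1%N); have := normB_le (fun c => mdeg (val c) == 2%N).
have := sum_normr_lam_coef_le (sum_normr_Vrec_le vD).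
have := sum_normr_lam_coef_le (sum_normr_Vrec_le vD').
rewrite /Delta_upper; lra.
Qed.

End sensitivity.

Lemma Delta_upper_gt0 {R : realType} (d : nat) : (0 < d)%N -> 0 < Delta_upper d :> R.
Proof.
move=> d_gt0; rewrite /Delta_upper ltr_wpDl ?mulr_ge0 ?sqrtr_ge0 //.
by rewrite !mulr_gt0 ?ltr0n ?invr_gt0 ?pi_gt0.
Qed.

Unset Implicit Arguments.

Theorem theorem5 (R : realType) (n d : nat) (eps : R)
  (dO : measure_display) (O : measurableType dO) (P : probability O R)
  (eta : Mon d -> O -> R)
  (g : (ncoef d).-tuple R -> d.-tuple R) :
  (1 <= n)%N -> (1 <= d)%N -> 0 < eps ->
  (forall c, measurable_fun [set: O] (eta c)) ->
  mutually_independent P eta ->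
  (forall c, is_laplace P (Delta_upper d / eps) (eta c)) ->
  measurable_fun [set: (ncoef d).-tuple R] g ->
  argmax_selector g ->
  forall (D D' : 'I_n -> record R d),
    (forall j, valid_record (D j)) -> (forall j, valid_record (D' j)) ->
    (exists j0 : 'I_n, D j0 <> D' j0 /\ forall j, j != j0 -> D j = D' j) ->
  forall Y : set (d.-tuple R), measurable Y ->
    (P ((fun w => g (noisy_coefs D eta w)) @^-1` Y)
      <= (expR eps)%:E * P ((fun w => g (noisy_coefs D' eta w)) @^-1` Y))%E.
Proof.
move=> _ d_gt0 eps_gt0 meta indep_eta lap_eta mg _ D D' vD vD' [j0 [_ DD']] Y mY.
have b_gt0 : 0 < Delta_upper d / eps :> R by rewrite divr_gt0 ?Delta_upper_gt0.
have mgY : measurable (g @^-1` Y) by rewrite -[X in measurable X]setTI; exact: mg.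
have := laplace_mechanism_l1_le (fun i => meta (enum_val i))
  (mutually_independent_reindex enum_valK indep_eta) b_gt0 (fun i => lap_eta (enum_val i))
  (fun i => Defs.coefD D (enum_val i)) (fun i => Defs.coefD D' (enum_val i)) mgY.
move=> /le_trans; apply; rewrite lee_wpmul2r ?measure_ge0 // lee_fin ler_expR.
rewrite ler_pdivrMr // mulrC divfK ?gt_eqF //.
apply: le_trans (coefD_sensitivity (vD j0) (vD' j0) DD').
by rewrite [leRHS](reindex _ (onW_bij _ (enum_val_bij (Mon d)))).
Qed.
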